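(* Let $q$ be a power of an odd prime, $0<t<r_1<r_2<\cdots<r_k<n$ integers, and $a_1,\dots,a_k\in\mathbb{F}_{q^n}^*$ whose multiplicative orders all divide $q^t-1$. Then $S(x)=\sum_{i=1}^k a_ix^{q^{r_i}}$ is a scattered polynomial of index $t$ over $\mathbb{F}_{q^n}$ if and only if, for every $\rho\in\mathbb{F}_{q^n}^*\setminus\mathbb{F}_q$, the polynomial $$S^t_\rho(x)=\sum_{i=1}^k a_i\big(\rho^{q^{r_i-t}}-\rho\big)x^{q^{r_i-t}}\in\mathbb{F}_{q^n}[x]$$ is a permutation polynomial of $\mathbb{F}_{q^n}$.
   Context: An $\mathbb{F}_q$-linearized polynomial $S\in\mathbb{F}_{q^n}[x]$ is a scattered polynomial of index $t$ over $\mathbb{F}_{q^n}$ if for all $y,z\in\mathbb{F}_{q^n}^*$, $\frac{S(y)}{y^{q^t}}=\frac{S(z)}{z^{q^t}}$ implies $y/z\in\mathbb{F}_q$. *)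

From HB Require Import structures.
From mathcomp Require Import all_boot all_order all_algebra all_field.
Set Implicit Arguments. Unset Strict Implicit. Unset Printing Implicit Defensive.
Import GRing.Theory.
Local Open Scope ring_scope.

Definition in_Fq (F : finFieldType) (q : nat) (x : F) : bool := x ^+ q == x.

Definition scattered_index (F : finFieldType) (q t : nat) (S : {poly F}) : Prop :=
  forall y z : F, y != 0 -> z != 0 ->
    S.[y] / y ^+ (q ^ t) = S.[z] / z ^+ (q ^ t) -> in_Fq q (y / z).

Definition permutation_poly (F : finFieldType) (P : {poly F}) : Prop :=
  bijective (fun x : F => P.[x]).

From HB Require Import structures.
From mathcomp Require Import all_boot all_order all_algebra all_field.
From mathcomp Require Import ring.
Set Implicit Arguments. Unset Strict Implicit. Unset Printing Implicit Defensive.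
Import GRing.Theory.
Local Open Scope ring_scope.

(* Write Q = q^t.  Since a_i^Q = a_i and x |-> x^Q is additive, raising
   S^t_rho(y) to the power Q gives S(rho y) - rho^Q S(y).  Hence a nonzero
   root y of the additive map S^t_rho is exactly a witness that
   S(rho y)/(rho y)^Q = S(y)/y^Q, i.e. that S is not scattered "in the
   direction" rho; and an additive map of a finite group is a permutation
   iff it has no nonzero root. *)

Section FrobeniusPower.
Variables (R : comNzRingType) (N : nat).
Hypothesis charN : [pchar R].-nat N.

Lemma exprBn_pchar (x y : R) : (x - y) ^+ N = x ^+ N - y ^+ N.
Proof. by rewrite exprDn_pchar // exprNn_pchar. Qed.

Lemma exprn_sum_pchar (I : Type) (s : seq I) (P : pred I) (f : I -> R) :
  (\sum_(i <- s | P i) f i) ^+ N = \sum_(i <- s | P i) f i ^+ N.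
Proof.
apply: (big_morph _ (fun x y => exprDn_pchar x y charN)).
by rewrite expr0n; case/andP: charN => /lt0n_neq0/negbTE ->.
Qed.

End FrobeniusPower.

Definition linearized (R : nzRingType) (k : nat) (c : 'I_k -> R)
    (e : 'I_k -> nat) : {poly R} :=
  \sum_(i < k) c i *: 'X^(e i).

Section Linearized.
Variables (R : comNzRingType) (k : nat).

Lemma horner_linearized (c : 'I_k -> R) e x :
  (linearized c e).[x] = \sum_(i < k) c i * x ^+ e i.
Proof. by rewrite horner_sum; apply: eq_bigr => i _; rewrite hornerZ hornerXn. Qed.

Lemma horner_linearizedB (c : 'I_k -> R) e x y :
    (forall i, [pchar R].-nat (e i)) ->
  (linearized c e).[x - y] = (linearized c e).[x] - (linearized c e).[y].
Proof.
move=> charE; rewrite !horner_linearized -sumrB.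
by apply: eq_bigr => i _; rewrite exprBn_pchar // mulrBr.
Qed.

Variables (a : 'I_k -> R) (N : 'I_k -> nat) (Q : nat).
Hypotheses (charQ : [pchar R].-nat Q) (aQ : forall i, a i ^+ Q = a i).

Lemma linearized_twist_expQ rho y :
  (linearized (fun i => a i * (rho ^+ N i - rho)) N).[y] ^+ Q =
  (linearized a (fun i => N i * Q)%N).[rho * y]
    - rho ^+ Q * (linearized a (fun i => N i * Q)%N).[y].
Proof.
rewrite !horner_linearized exprn_sum_pchar // mulr_sumr -sumrB.
apply: eq_bigr => i _.
by rewrite !exprMn aQ exprBn_pchar // -!exprM mulnC; ring.
Qed.

End Linearized.

Lemma bijective_additiveP (V : finZmodType) (f : V -> V) :
    (forall x y, f (x - y) = f x - f y) ->
  bijective f <-> (forall x, f x = 0 -> x = 0).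
Proof.
move=> fB; have f0 : f 0 = 0 by have := fB 0 0; rewrite !subrr.
split=> [/bij_inj f_inj x fx0 | ker0].
  by apply: f_inj; rewrite fx0 f0.
apply: injF_bij => x y fxy; apply/eqP; rewrite -subr_eq0.
by apply/eqP/ker0; rewrite fB fxy subrr.
Qed.

Lemma scattered_indexP (F : finFieldType) (q t : nat) (S : {poly F}) :
  scattered_index q t S <->
  (forall rho, rho != 0 -> ~~ in_Fq q rho -> forall y, y != 0 ->
     S.[rho * y] / (rho * y) ^+ (q ^ t) != S.[y] / y ^+ (q ^ t)).
Proof.
split=> [scat rho rho0 rhoFq y y0 | noeq y z y0 z0 eq_yz].
  apply: contra rhoFq => /eqP eq_ratio.
  by rewrite -(mulfK y0 rho); apply: scat; rewrite ?mulf_neq0.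
apply/contraT => yzFq; have yz0 : y / z != 0 by rewrite mulf_neq0 ?invr_eq0.
by have := noeq _ yz0 yzFq z z0; rewrite divfK // eq_yz eqxx.
Qed.

Lemma root_expQ_ratio (F : fieldType) (S : {poly F}) (Q : nat) (rho y s : F) :
    (0 < Q)%N -> rho != 0 -> y != 0 ->
    s ^+ Q = S.[rho * y] - rho ^+ Q * S.[y] ->
  (s == 0) = (S.[rho * y] / (rho * y) ^+ Q == S.[y] / y ^+ Q).
Proof.
move=> Q_gt0 rho0 y0 sQ.
rewrite -[s == 0]andTb -Q_gt0 -(expf_eq0 s Q) sQ subr_eq0 exprMn.
rewrite eqr_div ?mulf_neq0 ?expf_neq0 // mulrA.
by rewrite (inj_eq (mulIf (expf_neq0 Q y0))) [_ * rho ^+ Q]mulrC.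
Qed.

Section TwistedPermutation.
Variables (F : finFieldType) (k : nat) (a : 'I_k -> F) (N : 'I_k -> nat) (Q : nat).
Hypotheses (charN : forall i, [pchar F].-nat (N i)) (charQ : [pchar F].-nat Q)
           (aQ : forall i, a i ^+ Q = a i).

Local Notation S := (linearized a (fun i => N i * Q)%N).
Local Notation Srho rho := (linearized (fun i => a i * (rho ^+ N i - rho)) N).

Lemma linearized_twist_permutationP rho : rho != 0 ->
  permutation_poly (Srho rho) <->
  (forall y, y != 0 -> S.[rho * y] / (rho * y) ^+ Q != S.[y] / y ^+ Q).
Proof.
move=> rho0; rewrite /permutation_poly bijective_additiveP; last first.
  by move=> x y; apply: horner_linearizedB.
have Q_gt0 : (0 < Q)%N by case/andP: charQ.
have rootP y : y != 0 ->
    ((Srho rho).[y] == 0) = (S.[rho * y] / (rho * y) ^+ Q == S.[y] / y ^+ Q).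
  move=> y0; have := linearized_twist_expQ N charQ aQ rho y.
  exact: root_expQ_ratio Q_gt0 rho0 y0.
split=> [ker0 y y0 | noeq y root_y].
  by rewrite -rootP //; apply/eqP => /ker0/eqP; rewrite (negbTE y0).
by apply/eqP/contraT => y0; have := noeq y y0; rewrite -rootP // root_y eqxx.
Qed.

End TwistedPermutation.

Theorem mainTheorem7 (F : finFieldType) (q n t k : nat)
  (r : 'I_k -> nat) (a : 'I_k -> F) :
  (exists p e : nat, [/\ prime p, odd p, (0 < e)%N & q = (p ^ e)%N]) ->
  #|F| = (q ^ n)%N ->
  (0 < t)%N ->
  (forall i : 'I_k, (t < r i)%N /\ (r i < n)%N) ->
  (forall i j : 'I_k, (i < j)%N -> (r i < r j)%N) ->
  (forall i : 'I_k, a i != 0 /\ a i ^+ (q ^ t).-1 = 1) ->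
  scattered_index q t (\sum_(i < k) a i *: 'X^(q ^ r i)) <->
  (forall rho : F, rho != 0 -> ~~ in_Fq q rho ->
     permutation_poly
       (\sum_(i < k) (a i * (rho ^+ (q ^ (r i - t)) - rho)) *: 'X^(q ^ (r i - t)))).
Proof.
move=> [p [e [p_pr _ _ ->]]] cardF _ r_bounds _ a_unit.
have charF : p \in [pchar F].
  by apply: (@card_finPcharP F p (e * n)) p_pr; rewrite cardF expnM.
have char_qX (m : nat) : [pchar F].-nat ((p ^ e) ^ m)%N.
  by rewrite -expnM pnatX (pnatE _ p_pr) charF.
pose Q := ((p ^ e) ^ t)%N; pose N i := ((p ^ e) ^ (r i - t))%N.
have aQ i : a i ^+ Q = a i.
  have Q_gt0 : (0 < Q)%N by rewrite !expn_gt0 prime_gt0.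
  by rewrite -(prednK Q_gt0) exprS (proj2 (a_unit i)) mulr1.
have -> : \sum_(i < k) a i *: 'X^((p ^ e) ^ r i) =
          linearized a (fun i => N i * Q)%N.
  apply: eq_bigr => i _; rewrite -expnD subnK //.
  by case: (r_bounds i) => /ltnW.
rewrite scattered_indexP.
have twistP :=
  @linearized_twist_permutationP F k a N Q (fun i => char_qX _) (char_qX t) aQ.
split=> H rho rho0 rhoFq; first exact/(twistP _ rho0)/H.
exact/(twistP _ rho0)/H.
Qed.
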